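(* Let $R$ be a ring, $M$ a left $R$-module and $P$ a submodule of $M$. If $P$ is strongly irreducible in $M$ or $P$ is strongly hollow in $M$, then $\mathrm{Hom}_R(P/(P\cap Q),Q/(P\cap Q))=0$ for every submodule $Q$ of $M$.
   Context: $P$ is strongly irreducible in $M$ if for all submodules $K,L$ of $M$, $K\cap L\subseteq P$ implies $K\subseteq P$ or $L\subseteq P$. $P$ is strongly hollow in $M$ if for all submodules $K,L$ of $M$, $P\subseteq K+L$ implies $P\subseteq K$ or $P\subseteq L$. *)

From HB Require Import structures.
From mathcomp Require Import all_boot all_order all_algebra.
Set Implicit Arguments.
Unset Strict Implicit.
Unset Printing Implicit Defensive.
Import GRing.Theory.
Local Open Scope ring_scope.

Section SubModule.
Variables (R : pzRingType) (V : lmodType R) (S : submodClosed V).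

Inductive subm : predArgType := Subm (u : V) of u \in S.
Definition submval (w : subm) : V := let: Subm u _ := w in u.
HB.instance Definition _ := [isSub of subm for submval].
HB.instance Definition _ := [Choice of subm by <:].
HB.instance Definition _ := [SubChoice_isSubLmodule of subm by <:].
End SubModule.

(* Elements are canonical representatives of the cosets x + K.        *)
Section QuotModule.
Variables (R : pzRingType) (V : lmodType R) (K : submodClosed V).

Definition eqm (x y : V) := x - y \in K.

Lemma eqm_refl x : eqm x x.
Proof. by rewrite /eqm subrr rpred0. Qed.
Lemma eqm_sym x y : eqm x y -> eqm y x.
Proof. by rewrite /eqm => h; have := rpredZ (-1) h; rewrite scaleN1r opprB. Qed.
Lemma eqm_trans x y z : eqm x y -> eqm y z -> eqm x z.
Proof.
by rewrite /eqm => h1 h2; have := rpredD h1 h2; rewrite addrA subrK.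
Qed.
Lemma eqmD x y x' y' : eqm x x' -> eqm y y' -> eqm (x + y) (x' + y').
Proof.
rewrite /eqm => h1 h2; have := rpredD h1 h2.
by rewrite opprD addrACA.
Qed.
Lemma eqmN x y : eqm x y -> eqm (- x) (- y).
Proof. by rewrite /eqm => h; have := rpredZ (-1) h; rewrite scaleN1r opprD. Qed.
Lemma eqmZ a x y : eqm x y -> eqm (a *: x) (a *: y).
Proof. by rewrite /eqm => h; rewrite -scalerBr; exact: rpredZ. Qed.

Lemma rep_ex (x : V) : exists y, eqm x y.
Proof. by exists x; apply: eqm_refl. Qed.
Definition rep (x : V) : V := xchoose (rep_ex x).

Lemma repP x : eqm x (rep x).
Proof. exact: (xchooseP (rep_ex x)). Qed.
Lemma rep_eq x y : eqm x y -> rep x = rep y.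
Proof.
move=> h; apply: eq_xchoose => z; apply/idP/idP => hz.
  exact: eqm_trans (eqm_sym h) hz.
exact: eqm_trans h hz.
Qed.
Lemma rep_idem x : rep (rep x) = rep x.
Proof. by apply: rep_eq; apply: eqm_sym; apply: repP. Qed.

Definition quotm := {x : V | rep x == x}.
HB.instance Definition _ := Choice.on quotm.

Definition qpi (x : V) : quotm := exist _ (rep x) (introT eqP (rep_idem x)).

Lemma qpiE x y : eqm x y -> qpi x = qpi y.
Proof. by move=> h; apply: val_inj => /=; apply: rep_eq. Qed.
Lemma qpi_val (a : quotm) : qpi (val a) = a.
Proof. by apply: val_inj => /=; apply/eqP; case: a. Qed.
Lemma val_qpi x : eqm (val (qpi x)) x.
Proof. by apply: eqm_sym; apply: repP. Qed.

Definition qzero := qpi 0.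
Definition qopp (a : quotm) := qpi (- val a).
Definition qadd (a b : quotm) := qpi (val a + val b).
Definition qscale (r : R) (a : quotm) := qpi (r *: val a).

Lemma qaddA : associative qadd.
Proof.
move=> a b c; apply: qpiE.
apply: (@eqm_trans _ (val a + (val b + val c))).
  by apply: eqmD; [apply: eqm_refl | apply: val_qpi].
rewrite addrA; apply: eqm_sym.
by apply: eqmD; [apply: val_qpi | apply: eqm_refl].
Qed.
Lemma qaddC : commutative qadd.
Proof. by move=> a b; rewrite /qadd addrC. Qed.
Lemma qadd0 : left_id qzero qadd.
Proof.
move=> a; rewrite -[RHS]qpi_val; apply: qpiE.
rewrite -[X in eqm _ X]add0r.
by apply: eqmD; [apply: val_qpi | apply: eqm_refl].
Qed.
Lemma qaddN : left_inverse qzero qopp qadd.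
Proof.
move=> a; apply: qpiE; apply: (@eqm_trans _ (- val a + val a)).
  by apply: eqmD; [apply: val_qpi | apply: eqm_refl].
by rewrite addNr; apply: eqm_refl.
Qed.

HB.instance Definition _ := GRing.isZmodule.Build quotm qaddA qaddC qadd0 qaddN.

Lemma qscaleA a b v : qscale a (qscale b v) = qscale (a * b) v.
Proof.
apply: qpiE; rewrite -scalerA; apply: eqmZ; exact: val_qpi.
Qed.
Lemma qscale1 : left_id 1 qscale.
Proof. by move=> v; rewrite /qscale scale1r qpi_val. Qed.
Lemma qscaleDr : right_distributive qscale +%R.
Proof.
move=> r u v; rewrite /GRing.add /= /qadd; apply: qpiE.
apply: (@eqm_trans _ (r *: (val u + val v))).
  by apply: eqmZ; apply: val_qpi.
rewrite scalerDr; apply: eqm_sym.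
by apply: eqmD; apply: val_qpi.
Qed.
Lemma qscaleDl v : {morph qscale^~ v : a b / a + b}.
Proof.
move=> a b; rewrite /GRing.add /= /qadd /qscale; apply: qpiE.
rewrite scalerDl; apply: eqm_sym.
by apply: eqmD; apply: val_qpi.
Qed.

HB.instance Definition _ :=
  GRing.Zmodule_isLmodule.Build R quotm qscaleA qscale1 qscaleDr qscaleDl.
End QuotModule.

(* For submodules P, Q of M: the submodule P ∩ Q of the module P.      *)
Section Restrict.
Variables (R : pzRingType) (M : lmodType R) (P Q : submodClosed M).

Definition restr : {pred subm P} := [pred x : subm P | val x \in Q].
Arguments restr : clear implicits.

Lemma restr_closed : GRing.subsemimod_closed restr.
Proof.
split; [split|].
- by rewrite inE /= rpred0.
- by move=> x y; rewrite !inE /= => hx hy; rewrite rpredD.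
- by move=> a x; rewrite !inE /= => hx; exact: rpredZ.
Qed.
HB.instance Definition _ := GRing.isSubmodClosed.Build R (subm P) restr
  restr_closed.
End Restrict.
Arguments restr {R M} P Q.

Section Strong.
Variables (R : pzRingType) (M : lmodType R).

Definition strongly_irreducible (P : submodClosed M) : Prop :=
  forall K L : submodClosed M,
    {subset [predI K & L] <= P} -> {subset K <= P} \/ {subset L <= P}.

Definition in_sum (K L : {pred M}) (x : M) : Prop :=
  exists k l, [/\ k \in K, l \in L & x = k + l].

Definition strongly_hollow (P : submodClosed M) : Prop :=
  forall K L : submodClosed M,
    (forall x, x \in P -> in_sum K L x) -> {subset P <= K} \/ {subset P <= L}.
End Strong.

From HB Require Import structures.
From mathcomp Require Import all_boot all_order all_algebra.
From mathcomp Require Import boolp.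
Local Open Scope ring_scope.
Import GRing.Theory.

(* Given f : P/(P∩Q) -> Q/(P∩Q), consider the submodule G of M of all
   p - q with p ∈ P, q ∈ Q and f [p] = [q].  Linearity of f gives
   G ∩ Q ⊆ P, and every p ∈ P splits as (p - q) + q with f [p] = [q], so
   P ⊆ G + Q.  Applied to K := G, L := Q, strong irreducibility yields
   G ⊆ P or Q ⊆ P, and strong hollowness yields P ⊆ G or P ⊆ Q; in each
   of these four cases f is easily seen to vanish. *)

Section SubmodClosed.
Variables (R : pzRingType) (V : lmodType R) (S : submodClosed V).

Lemma submod_rpredN x : x \in S -> - x \in S.
Proof. by move=> Sx; rewrite -scaleN1r rpredZ. Qed.

Lemma submod_rpredB x y : x \in S -> y \in S -> x - y \in S.
Proof. by move=> Sx Sy; rewrite rpredD ?submod_rpredN. Qed.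

Lemma submod_rpredBl x y : x \in S -> x - y \in S -> y \in S.
Proof. by move=> Sx Sxy; rewrite -[y](subKr x) submod_rpredB. Qed.

End SubmodClosed.

Section QuotientMap.
Variables (R : pzRingType) (V : lmodType R) (K : submodClosed V).

Lemma qpiD x y : qpi K (x + y) = qpi K x + qpi K y.
Proof. by apply: qpiE; apply: eqmD; apply: eqm_sym; apply: val_qpi. Qed.

Lemma qpiZ a x : qpi K (a *: x) = a *: qpi K x.
Proof. by apply: qpiE; apply: eqmZ; apply: eqm_sym; apply: val_qpi. Qed.

Lemma eqm_qpi x y : qpi K x = qpi K y -> eqm K x y.
Proof.
move=> exy; apply: eqm_trans (eqm_sym (val_qpi K x)) _.
by rewrite exy; apply: val_qpi.
Qed.

Lemma qpi_eq0 x : (qpi K x = 0) <-> (x \in K).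
Proof.
split=> [/eqm_qpi | Kx]; first by rewrite /eqm subr0.
by apply: qpiE; rewrite /eqm subr0.
Qed.

Lemma quotm_eq0 : (forall x, x \in K) -> forall v : quotm K, v = 0.
Proof. by move=> VK v; rewrite -[v]qpi_val; apply/qpi_eq0/VK. Qed.

End QuotientMap.
Arguments qpi_eq0 {R V K x}.

Lemma quotm_restr_eq0 {R : pzRingType} {M : lmodType R} {P Q : submodClosed M} :
  {subset P <= Q} -> forall v : quotm (restr P Q), v = 0.
Proof. by move=> PQ; apply: quotm_eq0 => p; rewrite inE PQ ?(valP p). Qed.

Section GraphSubmodule.
Variables (R : pzRingType) (M : lmodType R) (P Q : submodClosed M).
Variable f : {linear quotm (restr P Q) -> quotm (restr Q P)}.

Definition graph_diff : {pred M} := fun x =>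
  `[< exists (p : subm P) (q : subm Q),
        x = val p - val q /\ f (qpi _ p) = qpi _ q >].

Lemma graph_diffP x :
  reflect (exists (p : subm P) (q : subm Q),
             x = val p - val q /\ f (qpi _ p) = qpi _ q)
          (x \in graph_diff).
Proof. exact: asboolP. Qed.

Lemma graph_diff_closed : GRing.subsemimod_closed graph_diff.
Proof.
split; [split|].
- apply/graph_diffP; exists 0, 0; split; first by rewrite subr0.
  by rewrite qpi_eq0.2 ?rpred0 // raddf0.
- move=> _ _ /graph_diffP[p1 [q1 [-> e1]]] /graph_diffP[p2 [q2 [-> e2]]].
  apply/graph_diffP; exists (p1 + p2), (q1 + q2); split.
    by rewrite /= opprD addrACA.
  by rewrite !qpiD raddfD; congr (_ + _); [exact: e1 | exact: e2].
- move=> a _ /graph_diffP[p [q [-> e]]].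
  apply/graph_diffP; exists (a *: p), (a *: q); split.
    by rewrite /= scalerBr.
  by rewrite !qpiZ linearZ; congr (_ *: _); exact: e.
Qed.

HB.instance Definition _ :=
  GRing.isSubmodClosed.Build R M graph_diff graph_diff_closed.

Lemma graph_diff_quotm (v : quotm (restr P Q)) :
  val (val v) - val (val (f v)) \in graph_diff.
Proof. by apply/graph_diffP; exists (val v), (val (f v)); rewrite !qpi_val. Qed.

Lemma graph_diff_capQ : {subset [predI graph_diff & Q] <= P}.
Proof.
move=> _ /andP[/graph_diffP[p [q [-> e]]] pqQ].
have pQ : val p \in Q by rewrite -(subrK (val q) (val p)) rpredD ?(valP q).
move: e; rewrite qpi_eq0.2 // raddf0 => /esym /qpi_eq0 qP.
exact: submod_rpredB (valP p) qP.
Qed.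

Lemma sub_graph_diffDQ x : x \in P -> in_sum graph_diff Q x.
Proof.
move=> Px; pose q : subm Q := val (f (qpi _ (Subm Px))).
exists (x - val q), (val q); split; rewrite ?subrK ?(valP q) //.
by apply/graph_diffP; exists (Subm Px), q; rewrite qpi_val.
Qed.

Lemma graph_diff_sub_lin_eq0 : {subset graph_diff <= P} -> forall v, f v = 0.
Proof.
move=> GP v; rewrite -[f v]qpi_val; apply/qpi_eq0.
exact: submod_rpredBl (valP (val v)) (GP _ (graph_diff_quotm v)).
Qed.

Lemma sub_graph_diff_lin_eq0 : {subset P <= graph_diff} -> forall v, f v = 0.
Proof.
move=> PG v; rewrite -[v]qpi_val.
have /graph_diffP[p [q [epq e]]] := PG _ (valP (val v)).
have qP : val q \in P by apply: submod_rpredBl (valP p) _; rewrite -epq (valP (val v)).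
have -> : qpi (restr P Q) (val v) = qpi _ p.
  by apply: qpiE; rewrite /eqm inE /= epq addrAC subrr add0r submod_rpredN ?(valP q).
by rewrite e; apply/qpi_eq0.
Qed.

End GraphSubmodule.
Arguments graph_diff_capQ {R M P Q} f.
Arguments sub_graph_diffDQ {R M P Q} f.

Theorem lemma2p11 (R : pzRingType) (M : lmodType R) (P : submodClosed M) :
  strongly_irreducible P \/ strongly_hollow P ->
  forall (Q : submodClosed M)
         (f : {linear quotm (restr P Q) -> quotm (restr Q P)}),
    forall x, f x = 0.
Proof.
move=> [irrP | hollowP] Q f x.
- have [GP | QP] := irrP _ _ (graph_diff_capQ f).
    exact: graph_diff_sub_lin_eq0.
  exact: quotm_restr_eq0.
- have [PG | PQ] := hollowP _ _ (sub_graph_diffDQ f).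
    exact: sub_graph_diff_lin_eq0.
  by rewrite (quotm_restr_eq0 PQ x) raddf0.
Qed.
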